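(* Let $j=\sqrt{-1}$ and let $a,b\in\mathbb{Z}[j]$ with $ab\neq 0$. Define the $3\times 2$ complex matrix $$X=\begin{pmatrix} X_S\\ X_T\end{pmatrix}=\begin{pmatrix} a & b\\ a & -b^*\\ b & a^*\end{pmatrix},$$ where $X_S=(a\ \ b)$ is the first row and $X_T=\begin{pmatrix} a & -b^*\\ b & a^*\end{pmatrix}$ consists of the last two rows. Then $$\det(X^\dagger X)\geq 2 \qquad\text{and}\qquad \det(X_S X_S^\dagger)\,\det(X_T^\dagger X_T)\geq 1.$$
   Context: $c^*$ denotes the complex conjugate of $c\in\mathbb{C}$, and $M^\dagger$ denotes the conjugate transpose of a complex matrix $M$. $\mathbb{Z}[j]$ is the ring of Gaussian integers. *)

From HB Require Import structures.
From mathcomp Require Import all_boot all_order all_algebra all_field.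
Set Implicit Arguments. Unset Strict Implicit. Unset Printing Implicit Defensive.
Import Order.TTheory GRing.Theory Num.Theory.
Local Open Scope ring_scope.

(* Complex numbers are modelled by algC; j = 'i. *)
Definition gaussInt (z : algC) : bool :=
  ('Re z \is a Num.int) && ('Im z \is a Num.int).

Definition adjmx m n (A : 'M[algC]_(m, n)) : 'M[algC]_(n, m) :=
  (map_mx Num.conj A)^T.

Definition XS (a b : algC) : 'M[algC]_(1, 2) :=
  \matrix_(i < 1, k < 2) (if k == 0 :> nat then a else b).

Definition XT (a b : algC) : 'M[algC]_(2, 2) :=
  \matrix_(i < 2, k < 2)
    (if i == 0 :> nat then (if k == 0 :> nat then a else - Num.conj b)
     else (if k == 0 :> nat then b else Num.conj a)).

Definition Xmat (a b : algC) : 'M[algC]_(1 + 2, 2) := col_mx (XS a b) (XT a b).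

From mathcomp Require Import all_boot all_order all_algebra all_field ring.
Import Order.TTheory GRing.Theory Num.Theory.
Local Open Scope ring_scope.

(* Both determinants are powers of the Frobenius mass s = |a|^2 + |b|^2:
   det(X^dagger X) = 2 s^2 and det(X_S X_S^dagger) det(X_T^dagger X_T) = s * s^2.
   A nonzero Gaussian integer has squared modulus a positive integer, so s >= 1. *)

Lemma det_mx22 (R : comNzRingType) (M : 'M[R]_2) :
  \det M = M 0 0 * M 1 1 - M 0 1 * M 1 0.
Proof.
rewrite (expand_det_row _ 0) !big_ord_recl big_ord0 /cofactor !det_mx11 /= !mxE.
have -> : lift 0 (0 : 'I_1) = 1 :> 'I_2 by exact: val_inj.
have -> : lift 1 (0 : 'I_1) = 0 :> 'I_2 by exact: val_inj.
by rewrite /bump /= expr0 expr1 addr0 mul1r mulN1r mulrN.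
Qed.

Lemma XmatE (a b : algC) : Xmat a b = \matrix_(i < 3, k < 2)
  (if i == 0 :> nat then (if k == 0 :> nat then a else b) else
   if i == 1 :> nat then (if k == 0 :> nat then a else - b^*) else
   (if k == 0 :> nat then b else a^*)).
Proof.
apply/matrixP => -[[|[|[|i]]] lti] k //; rewrite [RHS]mxE.
- rewrite (_ : Ordinal lti = lshift 2 (0 : 'I_1)); last exact: val_inj.
  by rewrite col_mxEu !mxE.
- rewrite (_ : Ordinal lti = rshift 1 (0 : 'I_2)); last exact: val_inj.
  by rewrite col_mxEd !mxE.
- rewrite (_ : Ordinal lti = rshift 1 (1 : 'I_2)); last exact: val_inj.
  by rewrite col_mxEd !mxE.
Qed.

Lemma det_adjXmat_Xmat (a b : algC) :
  \det (adjmx (Xmat a b) *m Xmat a b) = 2 * (`|a| ^+ 2 + `|b| ^+ 2) ^+ 2.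
Proof.
rewrite XmatE det_mx22 !mxE !big_ord_recl !big_ord0 !mxE /= !normCK.
rewrite !conjCK rmorphN /= conjCK; ring.
Qed.

Lemma det_XS_mul_det_XT (a b : algC) :
  \det (XS a b *m adjmx (XS a b)) * \det (adjmx (XT a b) *m XT a b) =
  (`|a| ^+ 2 + `|b| ^+ 2) ^+ 3.
Proof.
rewrite det_mx22 det_mx11 !mxE !big_ord_recl !big_ord0 !mxE /= !normCK.
rewrite !conjCK rmorphN /= conjCK; ring.
Qed.

Lemma gaussInt_sqrnorm_ge1 (z : algC) : gaussInt z -> z != 0 -> 1 <= `|z| ^+ 2.
Proof.
move=> /andP[intRe intIm] nz_z.
have /natrP[n def_n] : `|z| ^+ 2 \is a Num.nat.
  by rewrite -intrEge0 ?exprn_ge0 // normC2_Re_Im rpredD ?rpredX.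
have : `|z| ^+ 2 != 0 by rewrite expf_eq0 normr_eq0 (negbTE nz_z) andbF.
by rewrite def_n pnatr_eq0 ler1n lt0n.
Qed.

Theorem mainTheorem1 (a b : algC) :
  gaussInt a -> gaussInt b -> a * b != 0 ->
  2 <= \det (adjmx (Xmat a b) *m Xmat a b) /\
  1 <= \det (XS a b *m adjmx (XS a b)) * \det (adjmx (XT a b) *m XT a b).
Proof.
move=> ga gb; rewrite mulf_eq0 negb_or => /andP[nz_a nz_b].
rewrite det_adjXmat_Xmat det_XS_mul_det_XT.
have s_ge1 : 1 <= `|a| ^+ 2 + `|b| ^+ 2.
  by rewrite -[1]addr0 lerD ?gaussInt_sqrnorm_ge1 ?exprn_ge0.
split; last by rewrite exprn_ege1.
by rewrite -[X in X <= _]mulr1 ler_pM2l // exprn_ege1.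
Qed.
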